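(* Let $m\in\{2,3,4,\dots\}$, $R>0$, and let $w\in C^1((0,\infty))$ with $w(y)>0$ for $y\ge R$. Define, for $r,t>0$ and $0\le\eta,\xi\le1$, $$K(r,t,\eta,\xi)=\frac{(r+t\eta-2t\eta\xi)^m}{\sqrt{r+t\eta-t\eta\xi}\,\sqrt{r-\xi t\eta}},\qquad \Theta(r,t,\eta,\xi)=\frac{(r+t\eta-2t\eta\xi)^2+r^2-t^2\eta^2}{2r(r+t\eta-2t\eta\xi)}.$$ Then for all $0\le\xi,\eta\le1$ and $(r,t)\in\Sigma_1:=\{(r,t)\in(0,\infty)^2: r-t\ge\max\{R,\delta t\}>0\}$, $$\frac{\partial}{\partial t}\Big\{K(r,t,\eta,\xi)\,w(r+t\eta-2t\eta\xi)\,T_{m-1}(\Theta(r,t,\eta,\xi))\Big\}\ge-\Big\{E_m\frac{w(r+t\eta-2t\eta\xi)}{r+t\eta-2t\eta\xi}+|w'(r+t\eta-2t\eta\xi)|\Big\}K(r,t,\eta,\xi),$$ where $E_m=m+\frac18+\frac{5\zeta_m(m-1)^2}{3}$.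
   Context: $T_{m-1}$ is the Chebyshev polynomial $T_k(z)=\frac{(-1)^k}{(2k-1)!!}(1-z^2)^{1/2}\frac{d^k}{dz^k}(1-z^2)^{k-1/2}$ with $k=m-1$. $\zeta_m\in(0,1]$ is a fixed constant depending only on $m$ such that $\frac12\le T_{m-1}(z)\le1$ and $0<T'_{m-1}(z)\le(m-1)^2$ for $\frac1{1+\zeta_m}\le z\le1$; $\eta_m\in(0,1]$ is a fixed constant depending only on $m$ such that the Legendre polynomial $P_{m-1}(z)=\frac{1}{2^{m-1}(m-1)!}\frac{d^{m-1}}{dz^{m-1}}(z^2-1)^{m-1}$ satisfies $P_{m-1}(z)\ge\frac12$ and $0<P'_{m-1}(z)\le\frac12m(m-1)$ for $\frac1{1+\eta_m}\le z\le1$; and $\delta=\max\{2/\eta_m,2/\zeta_m\}$. *)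

From Stdlib Require Import Reals Factorial.
From Coquelicot Require Import Coquelicot.
Open Scope R_scope.

(* Chebyshev polynomials of the first kind T_k, as polynomial functions on R,
   via the three-term recurrence T_0 = 1, T_1 = z, T_{k+2} = 2 z T_{k+1} - T_k.
   (On (-1,1) this coincides with the Rodrigues-type formula of the paper;
   the polynomial is the extension to all of R, needed since Theta = 1 occurs.) *)
Fixpoint cheb_pair (k : nat) (z : R) : R * R :=
  match k with
  | O => (1, z)
  | S k' => let (a, b) := cheb_pair k' z in (b, 2 * z * b - a)
  end.

Definition chebT (k : nat) (z : R) : R := fst (cheb_pair k z).

Definition legendreP (n : nat) (z : R) : R :=
  / (2 ^ n * INR (fact n)) * Derive_n (fun y => (y ^ 2 - 1) ^ n) n z.

Definition Kfun (m : nat) (r t eta xi : R) : R :=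
  (r + t * eta - 2 * t * eta * xi) ^ m /
  (sqrt (r + t * eta - t * eta * xi) * sqrt (r - xi * t * eta)).

Definition Theta (r t eta xi : R) : R :=
  ((r + t * eta - 2 * t * eta * xi) ^ 2 + r ^ 2 - t ^ 2 * eta ^ 2) /
  (2 * r * (r + t * eta - 2 * t * eta * xi)).

Definition zeta_ok (m : nat) (zeta : R) : Prop :=
  0 < zeta <= 1 /\
  forall z, / (1 + zeta) <= z <= 1 ->
    / 2 <= chebT (m - 1) z <= 1 /\
    0 < Derive (chebT (m - 1)) z <= (INR m - 1) ^ 2.

Definition eta_ok (m : nat) (etam : R) : Prop :=
  0 < etam <= 1 /\
  forall z, / (1 + etam) <= z <= 1 ->
    / 2 <= legendreP (m - 1) z /\
    0 < Derive (legendreP (m - 1)) z <= / 2 * INR m * (INR m - 1).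

Definition C1_pos (w : R -> R) : Prop :=
  forall y, 0 < y -> ex_derive w y /\ continuous (Derive w) y.

From Stdlib Require Import Reals Lra Lia.
From Coquelicot Require Import Coquelicot.
Open Scope R_scope.

(* Write a = r + t eta - 2 t eta xi.  By the product rule the t-derivative is
   K [(d_t log K . T(Theta) + d_t Theta . T'(Theta)) w(a) + d_t a . w'(a) T(Theta)],
   and |d_t a| <= 1.  On Sigma_1 we have t <= r and 2 t <= zeta_m a; hence
   Theta = 1 - 2 xi (1 - xi) eta^2 t^2 / (r a) lies in [1/(1+zeta_m), 1], where
   1/2 <= T_{m-1} <= 1 and 0 < T'_{m-1} <= (m-1)^2, while
   a d_t log K >= 1/2 - m and -3 zeta_m / 4 <= a d_t Theta <= 0. *)

Lemma cheb_pair_ex_derive k z :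
  ex_derive (fun y => fst (cheb_pair k y)) z /\
  ex_derive (fun y => snd (cheb_pair k y)) z.
Proof.
induction k as [|k IH]; [simpl; split; auto_derive; auto|].
destruct IH as [Hfst Hsnd].
assert (Hstep : forall y, cheb_pair (S k) y =
  (snd (cheb_pair k y), 2 * y * snd (cheb_pair k y) - fst (cheb_pair k y))).
{ intro y; simpl; destruct (cheb_pair k y); reflexivity. }
split; eapply ex_derive_ext; try (intro y; rewrite Hstep; reflexivity); simpl.
- exact Hsnd.
- apply (ex_derive_minus (fun y => 2 * y * snd (cheb_pair k y))); [|exact Hfst].
  apply (ex_derive_mult (fun y => 2 * y)); [auto_derive; auto | exact Hsnd].
Qed.

Lemma chebT_ex_derive k z : ex_derive (chebT k) z.
Proof. exact (proj1 (cheb_pair_ex_derive k z)). Qed.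

Section Kernel.

Variables r t eta xi : R.

Local Notation A := (r + t * eta - 2 * t * eta * xi).
Local Notation B := (r + t * eta - t * eta * xi).
Local Notation C := (r - xi * t * eta).

Definition Kfun_logder (m : nat) : R :=
  INR m * (eta - 2 * eta * xi) / A - (eta - eta * xi) / (2 * B)
  + xi * eta / (2 * C).

Definition Theta_der : R :=
  - (2 * (xi * (1 - xi)) * eta ^ 2 * t * (2 * r + t * (eta * (1 - 2 * xi))))
  / (r * A ^ 2).

Lemma kernel_args_order :
  0 <= xi <= 1 -> 0 <= eta <= 1 -> 0 <= t -> r - t <= C /\ C <= A /\ A <= B.
Proof.
intros Hxi Heta Ht.
assert (0 <= t * eta) by nra; assert (t * eta <= t) by nra.
repeat split; nra.
Qed.

Lemma Kfun_pos m : 0 < A -> 0 < B -> 0 < C -> 0 < Kfun m r t eta xi.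
Proof.
intros HA HB HC; unfold Kfun.
apply Rdiv_lt_0_compat; [now apply pow_lt|].
apply Rmult_lt_0_compat; now apply sqrt_lt_R0.
Qed.

Lemma Kfun_is_derive m : 0 < A -> 0 < B -> 0 < C ->
  is_derive (fun s => Kfun m r s eta xi) t (Kfun m r t eta xi * Kfun_logder m).
Proof.
intros HA HB HC; unfold Kfun, Kfun_logder; auto_derive.
- repeat split; auto.
  apply Rgt_not_eq, Rmult_gt_0_compat; now apply sqrt_lt_R0.
- assert (HAm : INR m * A ^ pred m = INR m * A ^ m / A)
    by (destruct m; simpl; field; lra).
  assert (HsB := sqrt_lt_R0 B HB); assert (HsC := sqrt_lt_R0 C HC).
  assert (EB := sqrt_sqrt B (Rlt_le _ _ HB)).
  assert (EC := sqrt_sqrt C (Rlt_le _ _ HC)).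
  replace (r + t * eta + - (2 * t * eta * xi)) with A by ring.
  replace (r + t * eta + - (t * eta * xi)) with B by ring.
  replace (r + - (xi * t * eta)) with C by ring.
  set (sB := sqrt B) in *; set (sC := sqrt C) in *.
  rewrite HAm, <- EB, <- EC; field; lra.
Qed.

Lemma Theta_is_derive : 0 < r -> 0 < A ->
  is_derive (fun s => Theta r s eta xi) t Theta_der.
Proof.
intros Hr HA; unfold Theta, Theta_der; auto_derive.
- repeat split; auto. apply Rgt_not_eq, Rmult_gt_0_compat; lra.
- field; lra.
Qed.

Lemma Theta_eq : 0 < r -> 0 < A ->
  Theta r t eta xi = 1 - 2 * (xi * (1 - xi)) * eta ^ 2 * t ^ 2 / (r * A).
Proof. intros; unfold Theta; field; lra. Qed.

Lemma kernel_product_is_derive m (w f : R -> R) :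
  0 < r -> 0 < A -> 0 < B -> 0 < C ->
  ex_derive w A -> ex_derive f (Theta r t eta xi) ->
  is_derive
    (fun s => Kfun m r s eta xi * w (r + s * eta - 2 * s * eta * xi)
              * f (Theta r s eta xi)) t
    (Kfun m r t eta xi *
      ((Kfun_logder m * f (Theta r t eta xi)
        + Theta_der * Derive f (Theta r t eta xi)) * w A
       + (eta - 2 * eta * xi) * Derive w A * f (Theta r t eta xi))).
Proof.
intros Hr HA HB HC Hw Hf.
assert (Ha : is_derive (fun s => r + s * eta - 2 * s * eta * xi) t
               (eta - 2 * eta * xi)) by (auto_derive; auto; ring).
assert (Hwa := is_derive_comp w _ t _ _ (Derive_correct w A Hw) Ha).
assert (Hft := is_derive_comp f _ t _ _ (Derive_correct f _ Hf)
                 (Theta_is_derive Hr HA)).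
assert (HKw := is_derive_mult _ _ t _ _ (Kfun_is_derive m HA HB HC) Hwa Rmult_comm).
assert (H := is_derive_mult _ _ t _ _ HKw Hft Rmult_comm).
unfold plus, mult, scal in H; simpl in H; unfold mult in H; simpl in H.
match type of H with is_derive _ _ ?d =>
  replace (Kfun m r t eta xi * _) with d by ring end.
exact H.
Qed.

Lemma Kfun_logder_lower m : (1 <= m)%nat ->
  0 <= xi <= 1 -> 0 <= eta <= 1 -> 0 <= t -> 0 < C ->
  / 2 - INR m <= Kfun_logder m * A.
Proof.
intros Hm Hxi Heta Ht HC.
destruct (kernel_args_order Hxi Heta Ht) as [_ [HCA HAB]].
assert (HM : 1 <= INR m) by (apply (le_INR 1); lia).
assert (HAB' : A / B <= 1) by (apply Rle_div_l; lra).
assert (HAC' : 1 <= A / C) by (apply Rle_div_r; lra).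
replace (Kfun_logder m * A) with
  (INR m * (eta - 2 * eta * xi) - (eta - eta * xi) * (A / B) / 2
   + xi * eta * (A / C) / 2) by (unfold Kfun_logder; field; lra).
assert (0 <= (eta - eta * xi) * (1 - A / B)) by (apply Rmult_le_pos; nra).
assert (0 <= xi * eta * (A / C - 1)) by (apply Rmult_le_pos; nra).
assert (0 <= (INR m - / 2) * (1 + eta * (1 - 2 * xi)))
  by (apply Rmult_le_pos; nra).
nra.
Qed.

Section Sigma1.

Variable zeta : R.
Hypotheses (Hxi : 0 <= xi <= 1) (Heta : 0 <= eta <= 1) (Ht : 0 < t)
  (Htr : t <= r) (HA : 0 < A) (HtA : 2 * t <= zeta * A).

Lemma Theta_bounds : 0 < zeta <= 1 -> / (1 + zeta) <= Theta r t eta xi <= 1.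
Proof.
intros Hz.
assert (Hxi4 : 0 <= xi * (1 - xi) <= / 4)
  by (assert (0 <= (xi - / 2) ^ 2) by apply pow2_ge_0; split; nra).
assert (Hgap : 0 <= 2 * (xi * (1 - xi)) * eta ^ 2 * t ^ 2 / (r * A) <= zeta / 4).
{ split.
  - apply Rdiv_le_0_compat; [|nra].
    assert (0 <= xi * (1 - xi) * eta ^ 2) by nra; nra.
  - apply Rle_div_l; [nra|].
    assert (2 * (xi * (1 - xi)) * eta ^ 2 <= / 2) by nra.
    assert (2 * (xi * (1 - xi)) * eta ^ 2 * t ^ 2 <= / 2 * t ^ 2)
      by (apply Rmult_le_compat_r; nra).
    nra. }
rewrite Theta_eq by lra; split; [|lra].
replace (/ (1 + zeta)) with (1 / (1 + zeta)) by (field; lra).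
apply Rle_div_l; nra.
Qed.

Lemma Theta_der_bounds : - (3 * zeta / 4) <= Theta_der * A <= 0.
Proof.
assert (Hxi4 : 0 <= 2 * (xi * (1 - xi)) * eta ^ 2 <= / 2).
{ assert (0 <= (xi - / 2) ^ 2) by apply pow2_ge_0.
  assert (0 <= xi * (1 - xi) <= / 4) by (split; nra).
  assert (0 <= eta ^ 2 <= 1) by (split; nra).
  split; nra. }
set (N := 2 * (xi * (1 - xi)) * eta ^ 2 * t * (2 * r + t * (eta * (1 - 2 * xi)))).
assert (HN : 0 <= N <= 3 * zeta / 4 * (r * A)).
{ assert (Hs : - t <= t * (eta * (1 - 2 * xi)) <= t).
  { assert (- 1 <= eta * (1 - 2 * xi) <= 1) by (split; nra).
    split; nra. }
  assert (0 <= t * (2 * r + t * (eta * (1 - 2 * xi))) <= 3 * t * r)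
    by (split; nra).
  unfold N; split; nra. }
replace (Theta_der * A) with (- (N / (r * A))) by (unfold Theta_der, N; field; nra).
assert (0 <= N / (r * A) <= 3 * zeta / 4); [|lra].
split; [apply Rdiv_le_0_compat|apply Rle_div_l]; nra.
Qed.

End Sigma1.

End Kernel.

Lemma growth_factor_lower (M zeta a L D T T' : R) :
  1 <= M -> 0 <= zeta -> 0 < a ->
  / 2 - M <= L * a -> - (3 * zeta / 4) <= D * a <= 0 ->
  / 2 <= T <= 1 -> 0 < T' <= (M - 1) ^ 2 ->
  - ((M + / 8 + 5 * zeta * (M - 1) ^ 2 / 3) / a) <= L * T + D * T'.
Proof.
intros HM Hz Ha HL HD HT HT'.
assert (HLT : / 2 - M <= L * a * T) by nra.
assert (HDT : - (3 * zeta / 4 * (M - 1) ^ 2) <= D * a * T') by nra.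
assert (0 <= zeta * (M - 1) ^ 2) by (apply Rmult_le_pos; [lra | apply pow2_ge_0]).
unfold Rdiv; rewrite Ropp_mult_distr_l; apply Rle_div_l; [lra | nra].
Qed.

Lemma product_rule_lower (K X W c W' T E a : R) :
  0 < K -> 0 <= W -> 0 < a -> - (E / a) <= X -> - 1 <= c * T <= 1 ->
  K * (X * W + c * W' * T) >= - (E * W / a + Rabs W') * K.
Proof.
intros HK HW Ha HX HcT.
assert (HXW : - (E * W / a) <= X * W).
{ replace (- (E * W / a)) with (- (E / a) * W) by (field; lra).
  now apply Rmult_le_compat_r. }
assert (HW' : - Rabs W' <= c * W' * T).
{ destruct (Rcase_abs W'); [rewrite Rabs_left | rewrite Rabs_right]; nra. }
apply Rle_ge; rewrite Rmult_comm; apply Rmult_le_compat_l; lra.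
Qed.

Lemma Sigma1_bounds (Rr zeta delta r t : R) :
  0 < zeta -> 0 < t -> 2 / zeta <= delta -> r - t >= Rmax Rr (delta * t) ->
  Rr <= r - t /\ 2 * t <= zeta * (r - t).
Proof.
intros Hz Ht Hdelta Hrt.
assert (HRr := Rmax_l Rr (delta * t)); assert (Hdt := Rmax_r Rr (delta * t)).
split; [lra|].
assert (2 / zeta * t <= r - t) by (apply Rle_trans with (delta * t); nra).
replace (2 * t) with (zeta * (2 / zeta * t)) by (field; lra).
apply Rmult_le_compat_l; lra.
Qed.

Theorem proposition5p2 :
  forall (m : nat) (Rr : R) (w : R -> R) (zetam etam : R),
    (2 <= m)%nat ->
    0 < Rr ->
    C1_pos w ->
    (forall y, Rr <= y -> 0 < w y) ->
    zeta_ok m zetam ->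
    eta_ok m etam ->
    let delta := Rmax (2 / etam) (2 / zetam) in
    let Em := INR m + / 8 + 5 * zetam * (INR m - 1) ^ 2 / 3 in
    forall (r t eta xi : R),
      0 <= xi <= 1 -> 0 <= eta <= 1 ->
      0 < r -> 0 < t ->
      r - t >= Rmax Rr (delta * t) -> Rmax Rr (delta * t) > 0 ->
      let a := r + t * eta - 2 * t * eta * xi in
      Derive (fun s => Kfun m r s eta xi * w (r + s * eta - 2 * s * eta * xi)
                        * chebT (m - 1) (Theta r s eta xi)) t
      >= - (Em * w a / a + Rabs (Derive w a)) * Kfun m r t eta xi.
Proof.
intros m Rr w zetam etam Hm HRr Hw Hwpos [Hz Hcheb] _ delta Em
  r t eta xi Hxi Heta Hr Ht HSigma _ a.
assert (Hm1 : (1 <= m)%nat) by lia.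
destruct (Sigma1_bounds Rr zetam delta r t (proj1 Hz) Ht (Rmax_r _ _) HSigma)
  as [HRt HtA].
destruct (kernel_args_order r t eta xi Hxi Heta (Rlt_le _ _ Ht))
  as [HtC [HCA HAB]].
subst a.
assert (Hrt : 0 < r - t) by nra.
assert (HA : 0 < r + t * eta - 2 * t * eta * xi) by lra.
assert (HB : 0 < r + t * eta - t * eta * xi) by lra.
assert (HC : 0 < r - xi * t * eta) by lra.
assert (HtA' : 2 * t <= zetam * (r + t * eta - 2 * t * eta * xi)) by nra.
destruct (Hcheb (Theta r t eta xi)) as [HT HT'];
  [apply (Theta_bounds r t eta xi zetam); lra|].
erewrite is_derive_unique; [|exact (kernel_product_is_derive r t eta xi m w
  (chebT (m - 1)) Hr HA HB HC (proj1 (Hw _ HA)) (chebT_ex_derive _ _))].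
apply product_rule_lower.
- apply Kfun_pos; lra.
- apply Rlt_le, Hwpos; lra.
- lra.
- apply growth_factor_lower; try lra.
  + assert (2 <= INR m) by (apply (le_INR 2); lia); lra.
  + apply (Kfun_logder_lower r t eta xi m Hm1); lra.
  + apply (Theta_der_bounds r t eta xi zetam); lra.
- assert (- 1 <= eta - 2 * eta * xi <= 1) by (split; nra); split; nra.
Qed.
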